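(* Let $d,n\in\mathbb{N}$, let $\mathcal{S}^*\subseteq\{1,\dots,d\}$, let $a_{1:n}\in(\{0,1\}^d)^n$ be arbitrary, and let $x_t:=h_{\mathcal{S}^*}(a_t)$ for $t=1,\dots,n$. Then the cumulative log-loss of the predictor $\pi_d$ satisfies $\mathcal{L}_n(\pi_d)=-\log_2\prod_{t=1}^n\pi_d(x_t\mid x_{<t};a_{1:t})\le (d+1)\log_2(n+1)$.
   Context: For $\mathcal{S}\subseteq\{1,\dots,d\}$ and $a\in\{0,1\}^d$, $h_{\mathcal{S}}(a)=\bigwedge_{i\in\mathcal{S}}a^i$ (equal to $1$ if $\mathcal{S}=\emptyset$), where $a^i$ is the $i$-th component of $a$. The predictor $\pi_d$ is defined as follows. At time $t$, let $\mathcal{D}_t:=\{i\in\{1,\dots,d\}: a_\tau^i=1\text{ for every }\tau<t\text{ with }x_\tau=1\}$ and $y_t:=\bigwedge_{i\in\mathcal{D}_t}a_t^i$ (equal to $1$ if $\mathcal{D}_t=\emptyset$). Then $\pi_d(x\mid x_{<t};a_{1:t}):=\frac{t}{t+1}$ if $x=y_t$ and $:=\frac{1}{t+1}$ if $x\ne y_t$, for $x\in\{0,1\}$. *)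

From Stdlib Require Import Reals List Bool.
Import ListNotations.
Open Scope R_scope.

(* Inputs a_t in {0,1}^d are encoded as a : nat -> nat -> bool with
   a t i = i-th component of a_t (t, i are 1-based; only 1<=i<=d matter).
   Subsets S of {1..d} are membership predicates S : nat -> bool. *)

Definition h (d : nat) (S : nat -> bool) (a : nat -> bool) : bool :=
  forallb (fun i => implb (S i) (a i)) (seq 1 d).

Definition inD (x : nat -> bool) (a : nat -> nat -> bool) (t i : nat) : bool :=
  forallb (fun tau => implb (x tau) (a tau i)) (seq 1 (t - 1)).

Definition y_t (d : nat) (x : nat -> bool) (a : nat -> nat -> bool) (t : nat) : bool :=
  forallb (fun i => implb (inD x a t i) (a t i)) (seq 1 d).

Definition pi_d (d : nat) (x : nat -> bool) (a : nat -> nat -> bool) (t : nat) (b : bool) : R :=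
  if Bool.eqb b (y_t d x a t) then INR t / INR (t + 1) else 1 / INR (t + 1).

Definition log2 (r : R) : R := ln r / ln 2.

Definition cum_logloss (d n : nat) (x : nat -> bool) (a : nat -> nat -> bool) : R :=
  - log2 (fold_right Rmult 1 (map (fun t => pi_d d x a t (x t)) (seq 1 n))).

(* The target x_t = h_{S*}(a_t) is consistent with every past example, so S* is always
   contained in D_t and hence y_t = 1 forces x_t = 1: the predictor only errs by
   predicting 0 on a positive example, and such an example removes from D_{t+1} an
   index i with a_t^i = 0. So at most d of the n rounds are mistakes, each costing a
   factor 1/(t+1) >= 1/(n+1), while the correct rounds contribute factors t/(t+1)
   whose product telescopes to at least 1/(n+1). The likelihood is thus at least
   (n+1)^-(d+1). *)
From Stdlib Require Import Reals List Bool Lia Lra.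
Open Scope R_scope.

Lemma fold_right_Rmult_init (l : list R) (c : R) :
  fold_right Rmult c l = fold_right Rmult 1 l * c.
Proof. induction l as [|r l IH]; simpl; [ring | rewrite IH; ring]. Qed.

Lemma prod_seq1_S (f : nat -> R) (n : nat) :
  fold_right Rmult 1 (map f (seq 1 (S n))) =
  fold_right Rmult 1 (map f (seq 1 n)) * f (S n).
Proof.
  rewrite seq_S, map_app, fold_right_app; simpl.
  rewrite fold_right_Rmult_init; ring.
Qed.

Lemma forallb_false_exists {A : Type} (f : A -> bool) (l : list A) :
  forallb f l = false -> exists z, In z l /\ f z = false.
Proof.
  induction l as [|b l IH]; simpl; [discriminate|].
  destruct (f b) eqn:Hb; simpl; intros Hl.
  - destruct (IH Hl) as [z [Hz Hfz]]; eauto.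
  - eauto.
Qed.

Lemma filter_length_le_sub {A : Type} (f g : A -> bool) (l : list A) :
  (forall z, In z l -> f z = true -> g z = true) ->
  (length (filter f l) <= length (filter g l))%nat.
Proof.
  induction l as [|b l IH]; simpl; intros Hfg; [lia|].
  specialize (IH (fun z Hz => Hfg z (or_intror Hz))).
  specialize (Hfg b (or_introl eq_refl)).
  destruct (f b), (g b); simpl; lia.
Qed.

Lemma filter_length_lt_sub {A : Type} (f g : A -> bool) (l : list A) (w : A) :
  (forall z, In z l -> f z = true -> g z = true) ->
  In w l -> f w = false -> g w = true ->
  (length (filter f l) < length (filter g l))%nat.
Proof.
  induction l as [|b l IH]; simpl; intros Hfg Hw Hfw Hgw; [contradiction|].
  assert (Hle := filter_length_le_sub f g l (fun z Hz => Hfg z (or_intror Hz))).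
  destruct Hw as [<- | Hw].
  - rewrite Hfw, Hgw; simpl; lia.
  - specialize (IH (fun z Hz => Hfg z (or_intror Hz)) Hw Hfw Hgw).
    specialize (Hfg b (or_introl eq_refl)).
    destruct (f b), (g b); simpl; lia.
Qed.

Lemma neg_log2_le_of_lower_bound (p M : R) (m : nat) :
  0 < M -> 1 <= M ^ m * p -> - log2 p <= INR m * log2 M.
Proof.
  intros HM Hp.
  assert (HMm : 0 < M ^ m) by (apply pow_lt; exact HM).
  assert (Hp0 : 0 < p).
  { destruct (Rle_or_lt p 0) as [Hneg|]; [nra|assumption]. }
  assert (Hln : 0 <= ln (M ^ m * p)).
  { rewrite <- ln_1; destruct Hp as [Hlt | <-]; [left; apply ln_increasing|]; lra. }
  rewrite ln_mult, ln_pow in Hln by assumption.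
  assert (Hln2 : 0 < ln 2) by (rewrite <- ln_1; apply ln_increasing; lra).
  unfold log2, Rdiv.
  rewrite Ropp_mult_distr_l, <- Rmult_assoc.
  apply Rmult_le_compat_r; [left; apply Rinv_0_lt_compat|]; lra.
Qed.

Lemma inD_S (x : nat -> bool) (a : nat -> nat -> bool) (t i : nat) :
  (1 <= t)%nat -> inD x a (S t) i = inD x a t i && implb (x t) (a t i).
Proof.
  intros Ht; unfold inD.
  replace (S t - 1)%nat with (S (t - 1)) by lia.
  rewrite seq_S, forallb_app; simpl.
  replace (S (t - 1)) with t by lia.
  now rewrite andb_true_r.
Qed.

Definition card_D (d : nat) (x : nat -> bool) (a : nat -> nat -> bool) (t : nat) : nat :=
  length (filter (inD x a t) (seq 1 d)).

Lemma card_D_le (d : nat) x a t : (card_D d x a t <= d)%nat.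
Proof.
  unfold card_D; rewrite <- (length_seq d 1) at 2.
  apply filter_length_le.
Qed.

Lemma card_D_S_le (d : nat) x a t :
  (1 <= t)%nat -> (card_D d x a (S t) <= card_D d x a t)%nat.
Proof.
  intros Ht; apply filter_length_le_sub; intros i _.
  rewrite inD_S by exact Ht.
  now intros [? _]%andb_prop.
Qed.

Lemma pi_d_eq (d : nat) x a t b :
  b = y_t d x a t -> pi_d d x a t b * INR (t + 1) = INR t.
Proof.
  intros ->; unfold pi_d; rewrite eqb_reflx.
  field; apply not_0_INR; lia.
Qed.

Lemma pi_d_neq (d : nat) x a t b :
  b <> y_t d x a t -> pi_d d x a t b * INR (t + 1) = 1.
Proof.
  intros Hb; unfold pi_d.
  destruct (eqb b (y_t d x a t)) eqn:E; [now apply eqb_prop in E|].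
  field; apply not_0_INR; lia.
Qed.

Section RealizableTarget.

Variables (d : nat) (Sstar : nat -> bool) (a : nat -> nat -> bool).
Hypothesis HS : forall i, Sstar i = true -> (1 <= i <= d)%nat.

Let x (t : nat) : bool := h d Sstar (a t).

Lemma Sstar_sub_inD (t i : nat) : Sstar i = true -> inD x a t i = true.
Proof.
  intros Hi; unfold inD; apply forallb_forall; intros tau _.
  destruct (x tau) eqn:Hx; [simpl|reflexivity].
  unfold x, h in Hx; rewrite forallb_forall in Hx.
  assert (Hin : In i (seq 1 d)) by (apply in_seq; specialize (HS i Hi); lia).
  specialize (Hx i Hin); rewrite Hi in Hx; exact Hx.
Qed.

Lemma y_t_true_target (t : nat) : y_t d x a t = true -> x t = true.
Proof.
  unfold y_t; rewrite forallb_forall; intros Hy.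
  unfold x, h; apply forallb_forall; intros i Hin.
  destruct (Sstar i) eqn:Hi; [simpl|reflexivity].
  specialize (Hy i Hin); rewrite (Sstar_sub_inD t i Hi) in Hy; exact Hy.
Qed.

Lemma card_D_S_lt_of_mistake (t : nat) :
  (1 <= t)%nat -> x t <> y_t d x a t ->
  (card_D d x a (S t) < card_D d x a t)%nat.
Proof.
  intros Ht Hmiss.
  assert (Hy : y_t d x a t = false /\ x t = true).
  { destruct (y_t d x a t) eqn:Ey.
    - now rewrite (y_t_true_target t Ey) in Hmiss.
    - now destruct (x t). }
  destruct Hy as [Hy Hx].
  unfold y_t in Hy; apply forallb_false_exists in Hy.
  destruct Hy as [i [Hin Hi]].
  apply (filter_length_lt_sub _ _ _ i); [|exact Hin| |].
  - intros j _; rewrite inD_S by exact Ht; now intros [? _]%andb_prop.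
  - rewrite inD_S, Hx by exact Ht.
    destruct (inD x a t i), (a t i); easy.
  - destruct (inD x a t i); easy.
Qed.

Definition likelihood (n : nat) : R :=
  fold_right Rmult 1 (map (fun t => pi_d d x a t (x t)) (seq 1 n)).

Lemma likelihood_pos (n : nat) : 0 < likelihood n.
Proof.
  induction n as [|n IH]; [unfold likelihood; simpl; lra|].
  unfold likelihood; rewrite prod_seq1_S; fold (likelihood n).
  apply Rmult_lt_0_compat; [exact IH|].
  assert (Hn : 0 < INR (S n + 1)) by (apply lt_0_INR; lia).
  apply Rmult_lt_reg_r with (INR (S n + 1)); [exact Hn|].
  rewrite Rmult_0_l.
  destruct (bool_dec (x (S n)) (y_t d x a (S n))) as [Hok|Hmiss].
  - rewrite pi_d_eq by exact Hok; apply lt_0_INR; lia.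
  - rewrite pi_d_neq by exact Hmiss; lra.
Qed.

(* A correct round leaves likelihood * (n+1) unchanged; a mistake divides it by
   n+1 <= M but shrinks D_t, so one more factor M in the exponent pays for it. *)
Lemma likelihood_lower_bound (N n : nat) : (n <= N)%nat ->
  1 <= INR (N + 1) ^ (d - card_D d x a (S n)) * likelihood n * INR (n + 1).
Proof.
  set (M := INR (N + 1)).
  assert (HM : 1 <= M) by (unfold M; rewrite <- INR_1; apply le_INR; lia).
  induction n as [|n IH]; intros Hn.
  - unfold likelihood; simpl; rewrite !Rmult_1_r.
    apply pow_R1_Rle; exact HM.
  - specialize (IH ltac:(lia)).
    set (k := (d - card_D d x a (S n))%nat) in IH.
    set (k' := (d - card_D d x a (S (S n)))%nat).
    assert (HP := likelihood_pos n).
    assert (Hn1 : INR (S n) = INR (n + 1)) by (f_equal; lia).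
    assert (HPn : 0 <= likelihood n * INR (n + 1)) by (apply Rmult_le_pos; [lra | apply pos_INR]).
    unfold likelihood; rewrite prod_seq1_S; fold (likelihood n).
    rewrite Rmult_assoc, (Rmult_assoc (likelihood n)).
    destruct (bool_dec (x (S n)) (y_t d x a (S n))) as [Hok|Hmiss].
    + rewrite pi_d_eq, Hn1 by exact Hok.
      assert (Hk : M ^ k <= M ^ k').
      { apply Rle_pow; [exact HM|].
        assert (H := card_D_S_le d x a (S n) ltac:(lia)); unfold k, k'; lia. }
      nra.
    + rewrite pi_d_neq by exact Hmiss.
      assert (Hk : M ^ k * M <= M ^ k').
      { rewrite Rmult_comm, tech_pow_Rmult; apply Rle_pow; [exact HM|].
        assert (Hlt := card_D_S_lt_of_mistake (S n) ltac:(lia) Hmiss).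
        assert (Hle := card_D_le d x a (S n)); unfold k, k'; lia. }
      assert (HnM : INR (n + 1) <= M) by (apply le_INR; lia).
      assert (HMk : 0 <= M ^ k) by (apply pow_le; lra).
      apply Rle_trans with (M ^ k * likelihood n * M); [|nra].
      eapply Rle_trans; [exact IH|].
      apply Rmult_le_compat_l; [nra | exact HnM].
Qed.

End RealizableTarget.

Theorem theorem5 (d n : nat) (Sstar : nat -> bool)
  (HS : forall i, Sstar i = true -> (1 <= i <= d)%nat)
  (a : nat -> nat -> bool) :
  cum_logloss d n (fun t => h d Sstar (a t)) a <= INR (d + 1) * log2 (INR (n + 1)).
Proof.
  set (M := INR (n + 1)).
  set (P := likelihood d Sstar a n).
  set (k := (d - card_D d (fun t => h d Sstar (a t)) a (S n))%nat).
  assert (HM : 1 <= M) by (unfold M; rewrite <- INR_1; apply le_INR; lia).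
  assert (Hbound : 1 <= M ^ k * P * M)
    by exact (likelihood_lower_bound d Sstar a HS n n (le_n n)).
  assert (HP : 0 < P) by exact (likelihood_pos d Sstar a n).
  assert (Hk : M ^ k * M <= M ^ (d + 1)).
  { rewrite Nat.add_1_r, Rmult_comm, tech_pow_Rmult.
    apply Rle_pow; [exact HM | unfold k; lia]. }
  apply neg_log2_le_of_lower_bound; [lra|].
  change (1 <= M ^ (d + 1) * P); nra.
Qed.
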